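(* Let $\mathbb{E}$ be a finite-dimensional real inner product space and let $f_i:\mathbb{E}\to(-\infty,\infty]$, $i=1,\ldots,M$, be convex, directionally differentiable, continuous on their domains, with $\mathrm{dom} f_i$ closed, and suppose $F(x):=\min_{i\in[M]}f_i(x)$ is continuous on $\mathrm{dom} F$. If $x^*\in\mathrm{dom} F$ is a d-stationary point of the problem $\min_{x\in\mathbb{E}}F(x)$, then $x^*$ is a local minimizer of $F$.
   Context: $\mathrm{dom}\, g=\{x\mid g(x)<\infty\}$. Feasible cone: $\mathcal{F}(x;\mathcal{C})=\{d\mid \exists\varsigma'>0:\ x+\varsigma d\in\mathcal{C}\ \forall\varsigma\in(0,\varsigma')\}$ if $x\in\mathcal{C}$, else $\emptyset$. Directional differentiability: $g'(x;d)=\lim_{\varsigma\searrow0}(g(x+\varsigma d)-g(x))/\varsigma$ exists in $\mathbb{R}$ for all $x\in\mathrm{dom}\, g$, $d\in\mathcal{F}(x;\mathrm{dom}\, g)$. A point $x^*\in\mathrm{dom} F$ is a d-stationary point of $\min F$ if $F'(x^*;d)\ge0$ for all $d\in\mathcal{F}(x^*;\mathrm{dom} F)$. *)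

From HB Require Import structures.
From mathcomp Require Import all_boot all_order all_algebra.
From mathcomp Require Import all_classical all_reals all_analysis.
Set Implicit Arguments. Unset Strict Implicit. Unset Printing Implicit Defensive.
Import Order.TTheory GRing.Theory Num.Theory.
Import numFieldNormedType.Exports.
Local Open Scope classical_set_scope.
Local Open Scope ring_scope.

Section Defs.
Context {R : realType} {n : nat}.
Local Notation E := 'rV[R]_n.

Definition edom (g : E -> \bar R) : set E := [set x | (g x < +oo)%E].

Definition feas_cone (C : set E) (x : E) : set E :=
  [set d | C x /\ exists2 s' : R, 0 < s' &
                 forall s : R, 0 < s < s' -> C (x + s *: d)].

Definition ddir (g : E -> \bar R) (x d : E) (l : R) : Prop :=
  (fun s : R => (fine (g (x + s *: d)) - fine (g x)) / s) @ 0^'+ --> l.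

Definition dir_differentiable (g : E -> \bar R) : Prop :=
  forall x d, edom g x -> feas_cone (edom g) x d -> exists l : R, ddir g x d l.

Definition econvex (g : E -> \bar R) : Prop :=
  forall x y (t : R), edom g x -> edom g y -> 0 <= t <= 1 ->
    (g (t *: x + (1 - t) *: y)%R <= t%:E * g x + (1 - t)%:E * g y)%E.

Definition d_stationary (g : E -> \bar R) (xs : E) : Prop :=
  edom g xs /\
  forall d, feas_cone (edom g) xs d -> exists2 l : R, ddir g xs d l & 0 <= l.

Definition local_minimizer (g : E -> \bar R) (xs : E) : Prop :=
  \forall x \near xs, (g xs <= g x)%E.

Definition fmin (M : nat) (f : 'I_M -> E -> \bar R) : E -> \bar R :=
  fun x => \big[Order.min/+oo%E]_(i < M) f i x.

End Defs.

From HB Require Import structures.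
From mathcomp Require Import all_boot all_order all_algebra.
From mathcomp Require Import all_classical all_reals all_analysis.
From mathcomp Require Import ring lra.
Set Implicit Arguments.
Unset Strict Implicit.
Unset Printing Implicit Defensive.

Import Order.TTheory GRing.Theory Num.Theory.
Import numFieldNormedType.Exports.
Local Open Scope classical_set_scope.
Local Open Scope ring_scope.

(* Near the d-stationary point xs, every f_i stays above F(xs).  For an index
   that is not active at xs (f_i(xs) > F(xs), possibly +oo) this follows from
   continuity of f_i on its closed domain.  An active f_i is a convex majorant
   of F touching it at xs: along the segment to any x, F lies below the chord
   of f_i, so the directional derivative of F at xs in direction x - xs is at
   most f_i(x) - f_i(xs), while d-stationarity makes it nonnegative. *)

Section FiniteMin.
Context {R : realType} {n : nat}.
Local Notation E := 'rV[R]_n.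

Lemma real_ereal (y : \bar R) : (-oo < y)%E -> (y < +oo)%E -> y = (fine y)%:E.
Proof. by case: y. Qed.

Lemma le_notlty (z y : \bar R) : ~ (y < +oo)%E -> (z <= y)%E.
Proof. by rewrite ltey => /negP; rewrite negbK => /eqP ->; exact: leey. Qed.

Lemma fmin_le (M : nat) (f : 'I_M -> E -> \bar R) i x : (fmin f x <= f i x)%E.
Proof. by rewrite /fmin (bigD1 i) //= ge_min lexx. Qed.

Lemma le_fmin (M : nat) (f : 'I_M -> E -> \bar R) x y :
  (forall i, (y <= f i x)%E) -> (y <= fmin f x)%E.
Proof.
by move=> hy; rewrite /fmin; elim/big_ind: _ => // [|a b]; [exact: leey|rewrite le_min => ->].
Qed.

Lemma fmin_gtNy (M : nat) (f : 'I_M -> E -> \bar R) x :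
  (forall i, (-oo < f i x)%E) -> (-oo < fmin f x)%E.
Proof. by move=> hf; rewrite /fmin; elim/big_ind: _ => // a b; rewrite lt_min => -> ->. Qed.

Lemma econvex_segment (h : E -> \bar R) x y (a b s : R) :
  econvex h -> h x = a%:E -> h y = b%:E -> 0 <= s <= 1 ->
  (h (y + s *: (x - y))%R <= (s * a + (1 - s) * b)%:E)%E.
Proof.
move=> hconv hx hy hs.
have -> : y + s *: (x - y) = s *: x + (1 - s) *: y.
  by rewrite scalerBr scalerBl scale1r addrCA.
by have := hconv x y s; rewrite /edom /= hx hy !ltry -!EFinM -EFinD; apply.
Qed.

Lemma ddir_le (g : E -> \bar R) x d (l c : R) : ddir g x d l ->
  (\forall s \near 0^'+, fine (g (x + s *: d)) - fine (g x) <= c * s) -> l <= c.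
Proof.
move=> gd hc; rewrite -(cvg_lim _ gd) //.
apply: limr_le; first by apply/cvg_ex; exists l.
near=> s; have s0 : 0 < s by near: s; exact: nbhs_right_gt.
by rewrite ler_pdivrMr //; near: s.
Unshelve. all: by end_near.
Qed.

Lemma d_stationary_le_convex_majorant (F h : E -> \bar R) xs :
  (forall x, (-oo < F x)%E) -> (forall x, (-oo < h x)%E) -> econvex h ->
  (forall x, (F x <= h x)%E) -> h xs = F xs -> d_stationary F xs ->
  forall x, (F xs <= h x)%E.
Proof.
move=> Fgt hgt hconv Fh hFxs [domxs stat] x.
have [hx|] := pselect (h x < +oo)%E; last exact: le_notlty.
set r := fine (F xs); set a := fine (h x); set d := x - xs.
have Er : F xs = r%:E by exact: real_ereal.
have Ea : h x = a%:E by exact: real_ereal.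
have chord s : 0 <= s <= 1 -> (F (xs + s *: d)%R <= (s * a + (1 - s) * r)%:E)%E.
  move=> hs; apply: le_trans (Fh _) _.
  by apply: econvex_segment => //; rewrite hFxs.
have feas : feas_cone (edom F) xs d.
  split => //; exists 1 => // s /andP[s0 s1].
  by apply: le_lt_trans (chord s _) (ltry _); rewrite ltW // ltW.
have [l dl l0] := stat d feas.
suff : l <= a - r by rewrite Er Ea lee_fin; lra.
apply: (ddir_le dl); near=> s.
have s01 : 0 <= s <= 1.
  by apply/andP; split; apply: ltW; near: s; [exact: nbhs_right_gt|exact: nbhs_right_lt].
move: (chord s s01); rewrite (real_ereal (Fgt _) (le_lt_trans (chord s s01) (ltry _))).
rewrite lee_fin -/r; lra.
Unshelve. all: by end_near.
Qed.

Lemma near_ge_of_closed_edom (g : E -> \bar R) xs (y : \bar R) :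
  {within edom g, continuous g} -> closed (edom g) -> (y < g xs)%E ->
  \forall x \near xs, (y <= g x)%E.
Proof.
move=> gcont gclosed ygxs.
have [domxs|ndomxs] := pselect (edom g xs).
- have U : nbhs (g xs) [set z | (y < z)%E].
    by apply: open_nbhs_nbhs; split => //; exact: open_ereal_gt_ereal.
  have near_gt : \forall x \near xs, edom g x -> (y < g x)%E.
    exact: (subspace_continuousP (edom g) g).1 gcont xs domxs _ U.
  apply: filterS near_gt => x gxy.
  by have [/gxy/ltW|] := pselect (edom g x); last exact: le_notlty.
- have U : nbhs xs (~` edom g).
    by apply: open_nbhs_nbhs; split => //; exact: closed_openC.
  by apply: filterS U => x; exact: le_notlty.
Qed.

End FiniteMin.

Theorem mainTheorem3 (R : realType) (n M : nat) (f : 'I_M -> 'rV[R]_n -> \bar R)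
  (xs : 'rV[R]_n) :
  (forall i x, (-oo < f i x)%E) ->
  (forall i, econvex (f i)) ->
  (forall i, dir_differentiable (f i)) ->
  (forall i, {within edom (f i), continuous (f i)}) ->
  (forall i, closed (edom (f i))) ->
  {within edom (fmin f), continuous (fmin f)} ->
  d_stationary (fmin f) xs ->
  local_minimizer (fmin f) xs.
Proof.
move=> fgt fconv _ fcont fclosed _ stat.
have near_ge i : \forall x \near xs, (fmin f xs <= f i x)%E.
  have := fmin_le f i xs; rewrite le_eqVlt => /predU1P[active|inactive].
  - apply: filterE => x; apply: d_stationary_le_convex_majorant => //.
    + by move=> y; exact: fmin_gtNy.
    + exact: fmin_le.
  - exact: near_ge_of_closed_edom.
have near_ge_all := filter_forall _ near_ge.
near=> x; apply: le_fmin; near: x; exact: near_ge_all.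
Unshelve. all: by end_near.
Qed.
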